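(* Let $r\geq 1$ and let $\phi$ be the Drinfeld module over $K$ of rank $r$ with $\phi_\theta=\theta-\theta\tau^r$. Then $\phi[\theta]=\mathbb{F}_{q^r}$ (viewed inside $\overline{K}_\infty$), the field $K_\infty(\Lambda_\phi)$ contains $\mathbb{F}_{q^r}$, and $[K_\infty(\Lambda_\phi):K_\infty]\geq r$. Consequently, over all ranks, neither the degree $[K_\infty(\Lambda_\phi):K_\infty]$ nor the degree of the constant field extension $[\overline{\mathbb{F}_q}\cap K_\infty(\Lambda_\phi):\mathbb{F}_q]$ is bounded.
   Context: Let $\mathbb{F}_q$ be the finite field with $q$ elements, $K=\mathbb{F}_q(\theta)$, $A=\mathbb{F}_q[\theta]$, $K_\infty=\mathbb{F}_q((1/\theta))$, and $\overline{K}_\infty$ an algebraic closure of $K_\infty$; $\overline{\mathbb{F}_q}$ denotes the algebraic closure of $\mathbb{F}_q$ in $\overline{K}_\infty$. Let $\tau$ be the $q$-power Frobenius and $K\{\tau\}$ the skew polynomial ring with $\tau c=c^q\tau$. A Drinfeld module over $K$ of rank $r$ is an $\mathbb{F}_q$-algebra homomorphism $\phi:A\to K\{\tau\}$ with $\phi_\theta=\theta+a_1\tau+\dots+a_r\tau^r$, $a_r\neq0$. Its exponential $\exp_\phi(x)=\sum_{i\ge0}\alpha_ix^{q^i}$, $\alpha_0=1$, is the unique $\mathbb{F}_q$-linear entire power series with $\exp_\phi(ax)=\phi_a(\exp_\phi(x))$ for $a\in A$; its kernel $\Lambda_\phi$ is the period lattice. For $a\in A$, $\phi[a]=\{x\in\overline{K}_\infty\mid\phi_a(x)=0\}$.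 $K_\infty(S)$ denotes the field generated over $K_\infty$ by $S$. *)

From HB Require Import structures.
From mathcomp Require Import all_boot all_order all_algebra.
From mathcomp Require Import reals.
Set Implicit Arguments. Unset Strict Implicit. Unset Printing Implicit Defensive.
Import Order.TTheory GRing.Theory Num.Theory.
Local Open Scope ring_scope.

Section Defs.
Variables (R : realType) (F : finFieldType) (L : fieldType).

Definition is_subfield (P : L -> Prop) : Prop :=
  [/\ P 0, P 1, (forall x y, P x -> P y -> P (x - y)),
      (forall x y, P x -> P y -> P (x * y)) &
      (forall x, P x -> x != 0 -> P x^-1)].

Definition field_gen (S : L -> Prop) : L -> Prop :=
  fun x => forall P, is_subfield P -> (forall y, S y -> P y) -> P x.

Definition nonarch_abs (abs : L -> R) : Prop :=
  [/\ (forall x, 0 <= abs x), (forall x, abs x = 0 <-> x = 0),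
      (forall x y, abs (x * y) = abs x * abs y) &
      (forall x y, abs (x + y) <= Num.max (abs x) (abs y))].

Definition seq_cvg (abs : L -> R) (u : nat -> L) (l : L) : Prop :=
  forall e : R, 0 < e -> exists N, forall n, (N <= n)%N -> abs (u n - l) < e.

Definition seq_cauchy (abs : L -> R) (u : nat -> L) : Prop :=
  forall e : R, 0 < e -> exists N, forall m n, (N <= m)%N -> (N <= n)%N ->
    abs (u m - u n) < e.

(* Kinf is (a copy of) K_infty = F_q((1/theta)) inside L: the completion of
   F_q(theta) for an absolute value trivial on F_q with |theta| > 1 *)
Definition is_Kinfty (iota : {rmorphism F -> L}) (abs : L -> R) (theta : L)
    (Kinf : L -> Prop) : Prop :=
  [/\ is_subfield Kinf, Kinf theta, (forall c, Kinf (iota c)),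
      1 < abs theta &
      (forall p : {poly F}, p != 0 -> (map_poly iota p).[theta] != 0)] /\
  [/\ (forall u, (forall n, Kinf (u n)) -> seq_cauchy abs u ->
          exists l, Kinf l /\ seq_cvg abs u l) &
      (forall k, Kinf k -> forall e : R, 0 < e ->
          exists p q : {poly F}, (map_poly iota q).[theta] != 0 /\
            abs (k - (map_poly iota p).[theta] / (map_poly iota q).[theta]) < e)].

Definition algebraic_over (K : L -> Prop) : Prop :=
  forall x : L, exists p : {poly L}, [/\ p != 0, (forall i, K p`_i) & root p x].

Definition alg_over_Fq (iota : {rmorphism F -> L}) (x : L) : Prop :=
  exists p : {poly F}, p != 0 /\ root (map_poly iota p) x.

Definition in_Fq (iota : {rmorphism F -> L}) (x : L) : Prop := exists c, x = iota c.

(* [E : K] >= n : E contains n elements linearly independent over K *)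
Definition deg_ge (K E : L -> Prop) (n : nat) : Prop :=
  exists v : 'I_n -> L, (forall i, E (v i)) /\
    (forall c : 'I_n -> L, (forall i, K (c i)) ->
       \sum_(i < n) c i * v i = 0 -> forall i, c i = 0).

(* Drinfeld module phi_theta = sum_{j <= r} a j tau^j applied to x *)
Definition phi_apply (q : nat) (a : nat -> L) (r : nat) (x : L) : L :=
  \sum_(j < r.+1) a j * x ^+ (q ^ j)%N.

Definition phi_coef (theta : L) (r : nat) (j : nat) : L :=
  if j == 0%N then theta else if j == r then - theta else 0.

(* alpha is the coefficient sequence of exp_phi = sum alpha_i x^{q^i}:
   alpha_0 = 1 and exp_phi(theta x) = phi_theta(exp_phi(x)) as formal series
   (comparison of the coefficients of x^{q^n}) *)
Definition is_exp_coeffs (q : nat) (theta : L) (a : nat -> L) (r : nat)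
    (alpha : nat -> L) : Prop :=
  alpha 0%N = 1 /\
  forall n, alpha n * theta ^+ (q ^ n)%N =
    \sum_(j < r.+1 | (j <= n)%N) a j * alpha (n - j)%N ^+ (q ^ j)%N.

(* period lattice: zeros in L of exp_phi (the series converges to 0) *)
Definition lattice (q : nat) (abs : L -> R) (alpha : nat -> L) (x : L) : Prop :=
  seq_cvg abs (fun n => \sum_(i < n) alpha i * x ^+ (q ^ i)%N) 0.

Definition Kinf_lattice (q : nat) (abs : L -> R) (alpha : nat -> L)
    (Kinf : L -> Prop) : L -> Prop :=
  field_gen (fun x => Kinf x \/ lattice q abs alpha x).

End Defs.

From HB Require Import structures.
From mathcomp Require Import all_boot all_order all_algebra reals.
From mathcomp Require Import finfield separable.
From mathcomp Require Import ring lra zify.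
From Stdlib Require Import ClassicalEpsilon.

(* Since phi_theta = theta (1 - tau^r), the theta-torsion of phi is the set of
   fixed points of x |-> x ^+ q^r, i.e. F_{q^r}.  The coefficients of exp_phi
   vanish outside the multiples of r, so exp_phi (x w) = x exp_phi w for x in
   F_{q^r}; hence once there is a nonzero period w in K_infty, every x in F_{q^r}
   is the quotient (x w) / w of two periods.  Such a period comes from Newton's
   method: z |-> exp_phi (theta z) / theta = sum_i c_i z^(q^i) is F_q-linear with
   c_0 = 1 and is small at z = 1, so the iteration started at 1 converges in the
   complete field K_infty.  Finally, an F_q-basis of F_{q^r} stays linearly
   independent over K_infty: a relation with coefficients in the unit ball
   reduces modulo the maximal ideal to a relation over the residue field F_q. *)


Set Implicit Arguments.
Unset Strict Implicit.
Unset Printing Implicit Defensive.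

Import Order.TTheory GRing.Theory Num.Theory.
Local Open Scope ring_scope.

Section NonArchimedeanAbs.
Variables (R : realType) (L : fieldType) (abs : L -> R).
Hypothesis abs_na : nonarch_abs abs.

Lemma abs_ge0 x : 0 <= abs x. Proof. by case: abs_na. Qed.

Lemma abs_eq0 x : (abs x = 0) <-> (x = 0). Proof. by case: abs_na. Qed.

Lemma abs0 : abs 0 = 0. Proof. exact/abs_eq0. Qed.

Lemma abs_gt0 x : x != 0 -> 0 < abs x.
Proof. by move=> /eqP x0; rewrite lt_def abs_ge0 andbT; apply/eqP => /abs_eq0. Qed.

Lemma absM x y : abs (x * y) = abs x * abs y. Proof. by case: abs_na. Qed.

Lemma absD_max x y : abs (x + y) <= Num.max (abs x) (abs y). Proof. by case: abs_na. Qed.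

Lemma abs1 : abs 1 = 1.
Proof.
have a1_neq0 : abs 1 != 0 := lt0r_neq0 (abs_gt0 (oner_neq0 L)).
by apply: (mulfI a1_neq0); rewrite -absM !mulr1.
Qed.

Lemma absX x n : abs (x ^+ n) = abs x ^+ n.
Proof. by elim: n => [|n IH]; rewrite ?abs1 // !exprS absM IH. Qed.

Lemma absN x : abs (- x) = abs x.
Proof.
have absN1 : abs (-1) = 1.
  apply/eqP; rewrite -(pexpr_eq1 (n := 2)) ?abs_ge0 //.
  by rewrite -absX expr2 mulrNN mulr1 abs1.
by rewrite -mulN1r absM absN1 mul1r.
Qed.

Lemma absV x : abs x^-1 = (abs x)^-1.
Proof.
have [->|x0] := eqVneq x 0; first by rewrite invr0 abs0 invr0.
have ax0 := lt0r_neq0 (abs_gt0 x0).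
by apply: (mulfI ax0); rewrite -absM !mulfV // abs1.
Qed.

Lemma absBC x y : abs (x - y) = abs (y - x).
Proof. by rewrite -absN opprB. Qed.

Lemma absD_le x y e : abs x <= e -> abs y <= e -> abs (x + y) <= e.
Proof. by move=> xe ye; apply: le_trans (absD_max x y) _; rewrite ge_max xe ye. Qed.

Lemma absD_lt x y e : abs x < e -> abs y < e -> abs (x + y) < e.
Proof. by move=> xe ye; apply: le_lt_trans (absD_max x y) _; rewrite gt_max xe ye. Qed.

Lemma absB_le x y e : abs x <= e -> abs y <= e -> abs (x - y) <= e.
Proof. by move=> xe ye; apply: absD_le; rewrite ?absN. Qed.

Lemma absB_lt x y e : abs x < e -> abs y < e -> abs (x - y) < e.
Proof. by move=> xe ye; apply: absD_lt; rewrite ?absN. Qed.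

Lemma abs_le1_sub1 x e : e <= 1 -> abs (x - 1) <= e -> abs x <= 1.
Proof. by move=> e1 xe; rewrite -(subrK 1 x); apply: absD_le; rewrite ?abs1 ?(le_trans xe). Qed.

Lemma absD_dominant x y : abs y < abs x -> abs (x + y) = abs x.
Proof.
move=> yx; apply/eqP; rewrite eq_le; apply/andP; split.
  by apply: le_trans (absD_max x y) _; rewrite ge_max lexx ltW.
have := absD_max (x + y) (- y); rewrite addrK absN le_max.
by case/orP => // /(lt_le_trans yx); rewrite ltxx.
Qed.

Lemma abs_sum_le I (s : seq I) (P : pred I) (f : I -> L) e : 0 <= e ->
  (forall i, P i -> abs (f i) <= e) -> abs (\sum_(i <- s | P i) f i) <= e.
Proof. by move=> e0 fe; elim/big_ind: _ => [|x y|i /fe //]; rewrite ?abs0 //; apply: absD_le. Qed.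

Lemma abs_sum_lt I (s : seq I) (P : pred I) (f : I -> L) e : 0 < e ->
  (forall i, P i -> abs (f i) < e) -> abs (\sum_(i <- s | P i) f i) < e.
Proof. by move=> e0 fe; elim/big_ind: _ => [|x y|i /fe //]; rewrite ?abs0 //; apply: absD_lt. Qed.

Lemma abs_fixed_pow x N : (1 < N)%N -> x ^+ N = x -> x != 0 -> abs x = 1.
Proof.
move=> N1 xN x0; have ax0 := abs_gt0 x0.
have axN1 : abs x ^+ N.-1 = 1.
  apply: (mulfI (lt0r_neq0 ax0)); rewrite -exprS prednK ?(ltnW N1) //.
  by rewrite -absX xN mulr1.
have N1_gt0 : (0 < N.-1)%N by rewrite -ltnS prednK // ltnW.
by apply/eqP; rewrite -(pexpr_eq1 N1_gt0) ?axN1 // ltW.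
Qed.

Lemma abs_fixed_pow_le1 x N : (1 < N)%N -> x ^+ N = x -> abs x <= 1.
Proof.
move=> N1 xN; have [->|x0] := eqVneq x 0; first by rewrite abs0.
by rewrite (abs_fixed_pow N1).
Qed.

Lemma cvg_abs_le (u : nat -> L) l a e N :
  (forall n, (N <= n)%N -> abs (u n - a) <= e) -> seq_cvg abs u l -> abs (l - a) <= e.
Proof.
move=> ue ul; rewrite leNgt; apply/negP => el.
have e0 : 0 <= e := le_trans (abs_ge0 _) (ue N (leqnn N)).
have [M uM] := ul _ (le_lt_trans e0 el).
have {uM} := uM (maxn M N) (leq_maxl _ _); have := ue (maxn M N) (leq_maxr _ _).
set v := u _ => ve vl; suff : abs (l - a) < abs (l - a) by rewrite ltxx.
have E : l - a = (v - a) - (v - l) by ring.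
by rewrite {1}E; apply: absB_lt (le_lt_trans ve el) vl.
Qed.

Lemma cvg_unique (u : nat -> L) l l' : seq_cvg abs u l -> seq_cvg abs u l' -> l = l'.
Proof.
move=> ul ul'; apply/eqP; rewrite -subr_eq0; apply/eqP/abs_eq0/eqP.
rewrite eq_le abs_ge0 andbT leNgt; apply/negP => d0.
have [M uM] := ul _ d0; have [M' uM'] := ul' _ d0.
suff : abs (l - l') < abs (l - l') by rewrite ltxx.
have E : l - l' = (u (maxn M M') - l') - (u (maxn M M') - l) by ring.
by rewrite {1}E; apply: absB_lt; [apply: uM' | apply: uM]; rewrite ?leq_maxl ?leq_maxr.
Qed.

Lemma cvgB (u v : nat -> L) a b :
  seq_cvg abs u a -> seq_cvg abs v b -> seq_cvg abs (fun n => u n - v n) (a - b).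
Proof.
move=> ua vb e e0; have [M uM] := ua e e0; have [N vN] := vb e e0.
exists (maxn M N) => n; rewrite geq_max => /andP[Mn Nn].
have -> : u n - v n - (a - b) = (u n - a) - (v n - b) by ring.
exact: absB_lt (uM n Mn) (vN n Nn).
Qed.

Lemma eq_cvg (u v : nat -> L) l : u =1 v -> seq_cvg abs u l -> seq_cvg abs v l.
Proof. by move=> uv ul e e0; have [N uN] := ul e e0; exists N => n; rewrite -uv; apply: uN. Qed.

Lemma cvgMl0 (u : nat -> L) c : seq_cvg abs u 0 -> seq_cvg abs (fun n => c * u n) 0.
Proof.
move=> u0 e e0; have [->|c0] := eqVneq c 0.
  by exists 0%N => n _; rewrite mul0r subr0 abs0.
have [N uN] := u0 _ (divr_gt0 e0 (abs_gt0 c0)).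
exists N => n Nn; rewrite subr0 absM mulrC -ltr_pdivlMr ?abs_gt0 //.
by have := uN n Nn; rewrite subr0.
Qed.

Lemma series_cauchy (a : nat -> L) :
  seq_cvg abs a 0 -> seq_cauchy abs (fun n => \sum_(i < n) a i).
Proof.
move=> a0 e e0; have [N aN] := a0 e e0.
have tail m : (N <= m)%N -> abs (\sum_(i < m) a i - \sum_(i < N) a i) < e.
  move=> Nm; rewrite -!(big_mkord xpredT) (big_cat_nat (leq0n N) Nm) /=.
  rewrite [X in X - _]addrC addrK big_nat_cond.
  by apply: abs_sum_lt => // i /andP[/andP[Ni _] _]; rewrite -[a i]subr0 aN.
exists N => m n Nm Nn; have E : \sum_(i < m) a i - \sum_(i < n) a i =
  (\sum_(i < m) a i - \sum_(i < N) a i) - (\sum_(i < n) a i - \sum_(i < N) a i) by ring.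
by rewrite E; apply: absB_lt; apply: tail.
Qed.

End NonArchimedeanAbs.

Section SubfieldClosure.
Variables (L : fieldType) (P : L -> Prop).
Hypothesis P_subfield : is_subfield P.

Lemma subfield0 : P 0. Proof. by case: P_subfield. Qed.
Lemma subfield1 : P 1. Proof. by case: P_subfield. Qed.
Lemma subfieldB x y : P x -> P y -> P (x - y).
Proof. by case: P_subfield => _ _ PB _ _; apply: PB. Qed.

Lemma subfieldM x y : P x -> P y -> P (x * y).
Proof. by case: P_subfield => _ _ _ PM _; apply: PM. Qed.

Lemma subfieldV x : P x -> P x^-1.
Proof.
have [->|x0] := eqVneq x 0; first by rewrite invr0.
by case: P_subfield => _ _ _ _ PV /PV; apply.
Qed.

Lemma subfieldN x : P x -> P (- x).
Proof. by rewrite -sub0r; apply: subfieldB subfield0. Qed.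

Lemma subfieldD x y : P x -> P y -> P (x + y).
Proof. by move=> Px /subfieldN Py; rewrite -[y]opprK; apply: subfieldB. Qed.

Lemma subfieldX x n : P x -> P (x ^+ n).
Proof. by move=> Px; elim: n => [|n IH]; [apply: subfield1 | rewrite exprS; apply: subfieldM]. Qed.

Lemma subfield_div x y : P x -> P y -> P (x / y).
Proof. by move=> Px /subfieldV; apply: subfieldM. Qed.

Lemma subfield_sum I (s : seq I) (f : I -> L) :
  (forall i, P (f i)) -> P (\sum_(i <- s) f i).
Proof. by move=> Pf; elim/big_ind: _ => [|x y|i _]; [apply: subfield0 | apply: subfieldD |]. Qed.

End SubfieldClosure.

Lemma expr_fixed_expn (R : pzSemiRingType) (x : R) m k : x ^+ m = x -> x ^+ (m ^ k) = x.
Proof. by move=> xm; elim: k => [|k IH]; rewrite ?expr1 // expnSr exprM IH. Qed.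

Section AdditivePower.
Variables (L : fieldType) (q : nat).
Hypothesis q_gt0 : (0 < q)%N.
Hypothesis exprDq : forall x y : L, (x + y) ^+ q = x ^+ q + y ^+ q.

Lemma exprD_qn n (x y : L) : (x + y) ^+ (q ^ n) = x ^+ (q ^ n) + y ^+ (q ^ n).
Proof. by elim: n => [|n IH]; rewrite ?expn0 ?expr1 // expnSr !exprM IH exprDq. Qed.

Lemma expr0_qn n : (0 : L) ^+ (q ^ n) = 0.
Proof. by rewrite expr0n expn_eq0 eqn0Ngt q_gt0. Qed.

Lemma exprB_qn n (x y : L) : (x - y) ^+ (q ^ n) = x ^+ (q ^ n) - y ^+ (q ^ n).
Proof. by rewrite -[in RHS](subrK y x) (exprD_qn _ (x - y)) addrK. Qed.

Lemma expr_sum_qn n I (s : seq I) (f : I -> L) :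
  (\sum_(i <- s) f i) ^+ (q ^ n) = \sum_(i <- s) f i ^+ (q ^ n).
Proof. exact: (big_morph (fun x => x ^+ (q ^ n)) (exprD_qn n) (expr0_qn n)). Qed.

End AdditivePower.

Section FiniteFieldCard.
Variables (F : finFieldType) (L : fieldType) (iota : {rmorphism F -> L}).

Lemma card_finField_pchar :
  exists2 p, p \in [pchar L] & exists2 k, (0 < k)%N & #|F| = (p ^ k)%N.
Proof.
have [p _ pF] := finPcharP F; exists p; first exact: rmorph_pchar pF.
exists (logn p #|F|); last exact: card_pprimeChar.
by rewrite lt0n; apply: contraTneq (finNzRing_gt1 F) => k0; rewrite (card_pprimeChar pF) k0.
Qed.

Lemma exprD_card (x y : L) : (x + y) ^+ #|F| = x ^+ #|F| + y ^+ #|F|.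
Proof.
have [p pL [k _ ->]] := card_finField_pchar.
elim: k => [|k IH]; first by rewrite !expr1.
by rewrite expnSr !exprM IH -!(pFrobenius_autE pL) rmorphD.
Qed.

Lemma natr_card_expn n : (0 < n)%N -> ((#|F| ^ n)%:R : L) = 0.
Proof.
have [p pL [k k0 ->]] := card_finField_pchar => n0.
by rewrite -expnM natrX (pcharf0 pL) expr0n muln_eq0 !eqn0Ngt k0 n0.
Qed.

End FiniteFieldCard.

Section GeometricDecay.
Variable R : archiRealFieldType.

Lemma bernoulli_ineq (d : R) N : 0 <= d -> 1 + N%:R * d <= (1 + d) ^+ N.
Proof.
move=> d0; elim: N => [|N IH]; first by rewrite mul0r addr0 expr0.
rewrite exprS -natr1; apply: le_trans (ler_wpM2l (addr_ge0 ler01 d0) IH).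
have := mulr_ge0 (ler0n R N) (mulr_ge0 d0 d0); nra.
Qed.

Lemma expr_lt_eps (eps e : R) : 0 <= eps -> eps < 1 -> 0 < e -> exists N, eps ^+ N < e.
Proof.
move=> eps0 eps1 e0; have [->|eps_neq0] := eqVneq eps 0; first by exists 1%N; rewrite expr1.
have {}eps0 : 0 < eps by rewrite lt_def eps_neq0.
set d := eps^-1 - 1; have d0 : 0 < d by rewrite subr_gt0 invf_gt1.
have ed0 : 0 <= e^-1 / d by rewrite divr_ge0 ?invr_ge0 ?ltW.
set N := Num.bound (e^-1 / d); exists N.
have := archi_boundP ed0; rewrite -(ltr_pM2r d0) divfK ?lt0r_neq0 // -/N => ltN.
have := bernoulli_ineq N (ltW d0); rewrite (addrC 1 d) subrK => le_pow.
have epsN0 : 0 < eps ^+ N := exprn_gt0 N eps0.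
rewrite -(ltf_pV2 (x := e) (y := eps ^+ N)) ?posrE // -exprVn.
by apply: lt_le_trans le_pow; apply: lt_le_trans ltN _; rewrite lerDr.
Qed.

End GeometricDecay.

Section AdditiveSeriesRoot.
Variables (R : realType) (L : fieldType) (abs : L -> R) (K : L -> Prop).
Hypothesis abs_na : nonarch_abs abs.
Hypothesis K_subfield : is_subfield K.
Hypothesis K_complete : forall u, (forall n, K (u n)) -> seq_cauchy abs u ->
  exists l, K l /\ seq_cvg abs u l.
Variable q : nat.
Hypothesis q_gt1 : (1 < q)%N.
Hypothesis exprDq : forall x y : L, (x + y) ^+ q = x ^+ q + y ^+ q.
Variable c : nat -> L.
Hypothesis c0_eq1 : c 0%N = 1.
Hypothesis c_in_K : forall i, K (c i).
Hypothesis abs_c_le1 : forall i, abs (c i) <= 1.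
Hypothesis c_cvg0 : seq_cvg abs c 0.
Variable eps : R.
Hypothesis eps_ge0 : 0 <= eps.
Hypothesis eps_lt1 : eps < 1.
Hypothesis sum_c_small :
  exists N, forall n, (N <= n)%N -> abs (\sum_(i < n) c i) <= eps.

Let q_gt0 : (0 < q)%N := ltnW q_gt1.
Let eps_le1 : eps <= 1 := ltW eps_lt1.

Definition fpart z n := \sum_(i < n) c i * z ^+ (q ^ i).

Lemma fpartB z w n : fpart (z - w) n = fpart z n - fpart w n.
Proof. by rewrite /fpart -sumrB; apply: eq_bigr => i _; rewrite exprB_qn // mulrBr. Qed.

Lemma fpart_in_K z n : K z -> K (fpart z n).
Proof.
move=> Kz; apply: (subfield_sum K_subfield) => i.
by apply: (subfieldM K_subfield) => //; apply: (subfieldX K_subfield).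
Qed.

Lemma abs_fpart_term z i : abs z <= 1 -> abs (c i * z ^+ (q ^ i)) <= abs (c i) * abs z.
Proof.
move=> z1; rewrite (absM abs_na) (absX abs_na); apply: ler_wpM2l; first exact: abs_ge0.
by rewrite -[leRHS]expr1; apply: ler_wiXn2l; rewrite ?(abs_ge0 abs_na) // expn_gt0 q_gt0.
Qed.

Lemma fpart_cauchy z : abs z <= 1 -> seq_cauchy abs (fpart z).
Proof.
move=> z1; apply: (series_cauchy abs_na (a := fun i => c i * z ^+ (q ^ i))) => e e0.
have [N cN] := c_cvg0 e0.
exists N => n Nn; rewrite subr0; apply: le_lt_trans (abs_fpart_term n z1) _.
have := cN n Nn; rewrite subr0 => cn.
apply: le_lt_trans cn; rewrite -[leRHS]mulr1; apply: ler_wpM2l => //; exact: abs_ge0.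
Qed.

(* Meaningful only on the unit ball of K, where the series converges (fvalP). *)
Definition fval z := epsilon (inhabits 0) (fun l => K l /\ seq_cvg abs (fpart z) l).

Lemma fvalP z : K z -> abs z <= 1 -> K (fval z) /\ seq_cvg abs (fpart z) (fval z).
Proof.
move=> Kz z1; apply: (epsilon_spec (inhabits 0) (fun l => K l /\ _)).
by apply: K_complete (fpart_cauchy z1) => n; apply: fpart_in_K.
Qed.

Lemma abs_fval_le z : K z -> abs z <= 1 -> abs (fval z) <= abs z.
Proof.
move=> Kz z1; have [_ fz] := fvalP Kz z1; rewrite -[fval z]subr0.
apply: (cvg_abs_le abs_na (N := 0%N)) fz => n _; rewrite subr0.
apply: (abs_sum_le abs_na) => [|i _]; first exact: abs_ge0.
apply: le_trans (abs_fpart_term i z1) _.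
by rewrite -[leRHS]mul1r; apply: ler_wpM2r; [exact: abs_ge0 | exact: abs_c_le1].
Qed.

Lemma abs_fval_subid y : K y -> abs y <= 1 -> abs (fval y - y) <= abs y ^+ q.
Proof.
move=> Ky y1; have [_ fy] := fvalP Ky y1.
apply: (cvg_abs_le abs_na (N := 1%N)) fy => -[//|n] _.
rewrite /fpart big_ord_recl /= c0_eq1 mul1r expn0 expr1 addrAC subrr add0r.
apply: (abs_sum_le abs_na) => [|i _]; first by rewrite exprn_ge0 ?(abs_ge0 abs_na).
rewrite (absM abs_na) (absX abs_na) -[leRHS]mul1r.
apply: ler_pM; [exact: abs_ge0 | by rewrite exprn_ge0 ?(abs_ge0 abs_na) | exact: abs_c_le1 |].
apply: ler_wiXn2l; [exact: abs_ge0 | exact: y1 | by rewrite -{1}[q]expn1 leq_pexp2l].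
Qed.

Lemma abs_fval1 : abs (fval 1) <= eps.
Proof.
have one_le1 : abs 1 <= 1 by rewrite (abs1 abs_na).
have [_ f1] := fvalP (subfield1 K_subfield) one_le1; have [N cN] := sum_c_small.
rewrite -[fval 1]subr0; apply: (cvg_abs_le abs_na (N := N)) f1 => n Nn.
by rewrite subr0 /fpart; under eq_bigr do rewrite expr1n mulr1; apply: cN.
Qed.

Lemma fvalB z w : K z -> K w -> abs z <= 1 -> abs w <= 1 ->
  fval (z - w) = fval z - fval w.
Proof.
move=> Kz Kw z1 w1.
have [_ fzw] := fvalP (subfieldB K_subfield Kz Kw) (absB_le abs_na z1 w1).
have [[_ fz] [_ fw]] := (fvalP Kz z1, fvalP Kw w1).
apply: (cvg_unique abs_na fzw); apply: eq_cvg (cvgB abs_na fz fw) => n.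
by rewrite fpartB.
Qed.

(* Newton's iteration for the additive map fval, whose linear term is c 0 = 1:
   as fval y - y = O(|y|^q), the defect fval (newton n) decays geometrically. *)
Fixpoint newton n := if n is n'.+1 then newton n' - fval (newton n') else 1.

Lemma newton_spec n :
  [/\ K (newton n), abs (newton n - 1) <= eps & abs (fval (newton n)) <= eps ^+ n.+1].
Proof.
elim: n => [|n [Kz z1 fz]] /=.
  by rewrite subrr (abs0 abs_na) expr1 abs_fval1; split => //; apply: subfield1.
have zn1 := abs_le1_sub1 abs_na eps_le1 z1.
set y := fval (newton n); have [Ky _] := fvalP Kz zn1.
have ye : abs y <= eps.
  by apply: le_trans fz _; rewrite -[leRHS]expr1; apply: ler_wiXn2l.
have y1 : abs y <= 1 := le_trans ye eps_le1.
split; first exact: subfieldB.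
  by rewrite addrAC; apply: (absB_le abs_na).
rewrite fvalB // -/y -(absN abs_na) opprB; apply: le_trans (abs_fval_subid Ky y1) _.
have y0 := abs_ge0 abs_na y.
apply: le_trans (_ : abs y ^+ 2 <= _); first by apply: ler_wiXn2l.
by rewrite expr2 exprSr; apply: ler_pM.
Qed.

Lemma abs_newton_le1 n : abs (newton n) <= 1.
Proof. by have [_ z1 _] := newton_spec n; exact (abs_le1_sub1 abs_na eps_le1 z1). Qed.

Lemma abs_newtonB n m : (n <= m)%N -> abs (newton m - newton n) <= eps ^+ n.+1.
Proof.
elim: m => [|m IH]; first by rewrite leqn0 => /eqP ->; rewrite subrr (abs0 abs_na) exprn_ge0.
rewrite leq_eqVlt => /orP[/eqP <-|]; first by rewrite subrr (abs0 abs_na) exprn_ge0.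
rewrite ltnS => nm /=; rewrite addrAC; apply: (absB_le abs_na); first exact: IH.
have [_ _ fz] := newton_spec m; apply: le_trans fz _.
by apply: ler_wiXn2l.
Qed.

Lemma newton_cauchy : seq_cauchy abs newton.
Proof.
move=> e e0; have [N eN] := expr_lt_eps eps_ge0 eps_lt1 e0.
have eN1 : eps ^+ N.+1 < e by apply: le_lt_trans eN; apply: ler_wiXn2l.
exists N => m n Nm Nn.
have E : newton m - newton n = (newton m - newton N) - (newton n - newton N) by ring.
by rewrite E; apply: (absB_lt abs_na); apply: le_lt_trans eN1; apply: abs_newtonB.
Qed.

Lemma exists_fpart_root :
  exists z, [/\ K z, abs (z - 1) <= eps & seq_cvg abs (fpart z) 0].
Proof.
have Knewton n : K (newton n) by have [] := newton_spec n.
have [z [Kz zlim]] := K_complete Knewton newton_cauchy.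
have z1 : abs (z - 1) <= eps.
  by apply: (cvg_abs_le abs_na (N := 0%N)) zlim => n _; have [] := newton_spec n.
have zle1 := abs_le1_sub1 abs_na eps_le1 z1.
have fz_small n : abs (fval z) <= eps ^+ n.+1.
  have [Kzn _ fzn] := newton_spec n; have zn1 := abs_newton_le1 n.
  have zzn : abs (z - newton n) <= eps ^+ n.+1.
    by apply: (cvg_abs_le abs_na (N := n)) zlim => m; apply: abs_newtonB.
  rewrite -(subrK (fval (newton n)) (fval z)) -fvalB //; apply: (absD_le abs_na) => //.
  by apply: le_trans zzn; apply: abs_fval_le; [apply: subfieldB | apply: (absB_le abs_na)].
have fz0 : fval z = 0.
  apply/(abs_eq0 abs_na)/eqP; rewrite eq_le abs_ge0 // andbT leNgt; apply/negP => fz_pos.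
  have [N eN] := expr_lt_eps eps_ge0 eps_lt1 fz_pos.
  have := le_lt_trans (fz_small N) (le_lt_trans (ler_wiXn2l eps_ge0 eps_le1 (leqnSn N)) eN).
  by rewrite ltxx.
by exists z; split => //; have [_] := fvalP Kz zle1; rewrite fz0.
Qed.

End AdditiveSeriesRoot.

Lemma sum_phi_coef (L : fieldType) (theta : L) r (P : pred nat) (f : nat -> L) :
  (0 < r)%N -> \sum_(j < r.+1 | P j) phi_coef theta r j * f j =
  (if P 0%N then theta * f 0%N else 0) + (if P r then - theta * f r else 0).
Proof.
case: r => [//|r] _; rewrite big_mkcond big_ord_recl big_ord_recr /= big1 ?add0r.
  by rewrite /phi_coef /= eqxx; case: (P 0%N); case: (P r.+1); rewrite ?mulNr.
by move=> i _; rewrite /phi_coef /= eqSS (ltn_eqF (ltn_ord i)) mul0r if_same.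
Qed.

Lemma phi_apply_theta (L : fieldType) q (theta : L) r x : (0 < r)%N ->
  phi_apply q (phi_coef theta r) r x = theta * x - theta * x ^+ (q ^ r).
Proof.
move=> r0; have /= := sum_phi_coef theta xpredT (fun j => x ^+ (q ^ j)) r0.
by rewrite expn0 expr1 mulNr => <-.
Qed.

Section KinftyFacts.
Variables (R : realType) (F : finFieldType) (L : fieldType) (iota : {rmorphism F -> L}).
Variables (abs : L -> R) (theta : L) (Kinf : L -> Prop).
Hypothesis Kinf_spec : is_Kinfty iota abs theta Kinf.

Lemma Kinf_subfield : is_subfield Kinf. Proof. by case: Kinf_spec => -[]. Qed.
Lemma Kinf_theta : Kinf theta. Proof. by case: Kinf_spec => -[]. Qed.
Lemma abs_theta_gt1 : 1 < abs theta. Proof. by case: Kinf_spec => -[]. Qed.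

Lemma Kinf_complete u : (forall n, Kinf (u n)) -> seq_cauchy abs u ->
  exists l, Kinf l /\ seq_cvg abs u l.
Proof. by case: Kinf_spec => _ [complete _]; apply: complete. Qed.

Lemma Kinf_approx k e : Kinf k -> 0 < e -> exists p d : {poly F},
  (map_poly iota d).[theta] != 0 /\
  abs (k - (map_poly iota p).[theta] / (map_poly iota d).[theta]) < e.
Proof. by case: Kinf_spec => _ [_ approx] Kk e0; apply: approx. Qed.

End KinftyFacts.

Lemma card_expn_gt1 (F : finFieldType) n : (0 < n)%N -> (1 < #|F| ^ n)%N.
Proof.
move=> n0; apply: leq_trans (finNzRing_gt1 F) _.
by rewrite -{1}[#|F|]expn1 leq_pexp2l // ltnW // finNzRing_gt1.
Qed.

Section ExponentialCoefficients.
Variables (R : realType) (F : finFieldType) (L : fieldType) (iota : {rmorphism F -> L}).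
Variables (abs : L -> R) (theta : L) (Kinf : L -> Prop).
Hypothesis abs_na : nonarch_abs abs.
Hypothesis Kinf_spec : is_Kinfty iota abs theta Kinf.
Local Notation q := #|F|.
Local Notation T := (abs theta).
Local Notation eps := (abs theta)^-1.

Let T_gt1 : 1 < T := abs_theta_gt1 Kinf_spec.
Let T_gt0 : 0 < T := lt_trans ltr01 T_gt1.
Let eps_ge0 : 0 <= eps. Proof. by rewrite invr_ge0 ltW. Qed.
Let eps_lt1 : eps < 1. Proof. by rewrite invf_lt1. Qed.
Let eps_le1 : eps <= 1 := ltW eps_lt1.
Let q_gt0 : (0 < q)%N := ltnW (finNzRing_gt1 F).

Lemma theta_neq0 : theta != 0.
Proof. by apply: contraTneq T_gt1 => ->; rewrite (abs0 abs_na) ltr10. Qed.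

Lemma abs_thetaXB m : (1 < m)%N -> abs (theta ^+ m - theta) = T ^+ m.
Proof.
move=> m1; rewrite (absD_dominant abs_na) (absX abs_na) // (absN abs_na).
by rewrite -{1}[T]expr1 ltr_eXn2l.
Qed.

Lemma thetaXB_neq0 m : (1 < m)%N -> theta ^+ m - theta != 0.
Proof.
move=> m1; apply: contra_neq (lt0r_neq0 (exprn_gt0 m T_gt0)) => E.
by rewrite -abs_thetaXB // E (abs0 abs_na).
Qed.

Variables (r : nat) (alpha : nat -> L).
Hypothesis r_gt0 : (0 < r)%N.
Hypothesis alpha_exp : is_exp_coeffs q theta (phi_coef theta r) r alpha.

Lemma card_expn_mulr_gt1 k : (1 < q ^ (k.+1 * r))%N.
Proof. by apply: card_expn_gt1; rewrite muln_gt0. Qed.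

Lemma exp_coeffs_rec n : alpha n * (theta ^+ (q ^ n) - theta) =
  if (r <= n)%N then - theta * alpha (n - r)%N ^+ (q ^ r) else 0.
Proof.
have [_ /(_ n)] := alpha_exp.
have /= -> := sum_phi_coef theta (fun j => j <= n)%N (fun j => alpha (n - j) ^+ (q ^ j)) r_gt0.
rewrite subn0 expn0 expr1 => E.
by rewrite mulrBr E [theta * _]mulrC addrAC subrr add0r.
Qed.

Lemma exp_coeff_eq0 n : ~~ (r %| n)%N -> alpha n = 0.
Proof.
elim/ltn_ind: n => n IH r_ndvd_n.
have n0 : (0 < n)%N by case: n r_ndvd_n {IH} => //; rewrite dvdn0.
apply: (mulIf (thetaXB_neq0 (card_expn_gt1 F n0))); rewrite mul0r exp_coeffs_rec.
case: leqP => // rn.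
have lt_nr_n : (n - r < n)%N by rewrite ltn_subrL n0 r_gt0.
have ndvd : ~~ (r %| n - r)%N.
  by apply: contra r_ndvd_n => /dvdn_add /(_ (dvdnn r)); rewrite subnK.
by rewrite IH // (expr0_qn L q_gt0) mulr0.
Qed.

Lemma exp_coeff_step k : alpha (k.+1 * r) * (theta ^+ (q ^ (k.+1 * r)) - theta) =
  - theta * alpha (k * r) ^+ (q ^ r).
Proof. by rewrite exp_coeffs_rec leq_pmull // mulSn addKn. Qed.

Lemma exp_coeff_in_Kinf n : Kinf (alpha n).
Proof.
have KS := Kinf_subfield Kinf_spec.
have [r_dvd_n|/exp_coeff_eq0 ->] := boolP (r %| n)%N; last exact: subfield0.
rewrite -(divnK r_dvd_n); elim: (n %/ r)%N => [|k IH].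
  by case: alpha_exp => -> _; apply: subfield1.
rewrite -[alpha _](mulfK (thetaXB_neq0 (card_expn_mulr_gt1 k))) exp_coeff_step.
have Kth := Kinf_theta Kinf_spec.
apply: subfield_div => //; last by apply: subfieldB => //; apply: subfieldX.
by apply: subfieldM => //; [apply: subfieldN | apply: subfieldX].
Qed.

(* Normalised so that exp_phi (theta z) = theta * \sum_i ncoef i * z ^+ (q ^ i). *)
Definition ncoef i := alpha i * theta ^+ (q ^ i) / theta.

Lemma ncoef0 : ncoef 0 = 1.
Proof. by rewrite /ncoef; case: alpha_exp => -> _; rewrite mul1r expn0 expr1 mulfV ?theta_neq0. Qed.

Lemma ncoef_in_Kinf i : Kinf (ncoef i).
Proof.
have KS := Kinf_subfield Kinf_spec; have Kth := Kinf_theta Kinf_spec.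
by apply: subfield_div => //; apply: subfieldM => //; [apply: exp_coeff_in_Kinf | apply: subfieldX].
Qed.

Lemma ncoef_eq0 i : ~~ (r %| i)%N -> ncoef i = 0.
Proof. by move=> /exp_coeff_eq0; rewrite /ncoef => ->; rewrite !mul0r. Qed.

Lemma ncoef_step k : ncoef (k.+1 * r) * (theta ^+ (q ^ (k.+1 * r)) - theta) =
  - ncoef (k * r) ^+ (q ^ r) * theta ^+ (q ^ r).
Proof.
have qkr : (q ^ (k.+1 * r) = q ^ (k * r) * q ^ r)%N by rewrite -expnD mulSn addnC.
have E := exp_coeff_step k; rewrite /ncoef !exprMn -!exprM -qkr exprVn.
set tN := theta ^+ _ in E *; set tQ := theta ^+ (q ^ r).
have tQ0 : tQ != 0 by rewrite expf_neq0 ?theta_neq0.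
have -> : alpha (k.+1 * r) * tN / theta * (tN - theta) =
  alpha (k.+1 * r) * (tN - theta) * tN / theta by ring.
by rewrite E; field; rewrite theta_neq0 tQ0.
Qed.

Lemma abs_ncoef_step k : abs (ncoef (k.+1 * r)) * T ^+ (q ^ (k.+1 * r)) =
  abs (ncoef (k * r)) ^+ (q ^ r) * T ^+ (q ^ r).
Proof.
have := congr1 abs (ncoef_step k).
rewrite (absM abs_na (ncoef _)) (absM abs_na (- _)) (absN abs_na) (absX abs_na (ncoef _)).
by rewrite (absX abs_na theta) (abs_thetaXB (card_expn_mulr_gt1 k)).
Qed.

Lemma abs_ncoef_r : abs (ncoef r) = 1.
Proof.
have TQ0 : T ^+ (q ^ r) != 0 by rewrite expf_neq0 // lt0r_neq0.
have := abs_ncoef_step 0; rewrite mul0n mul1n ncoef0 (abs1 abs_na) expr1n mul1r => E.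
by apply: (mulIf TQ0); rewrite E mul1r.
Qed.

Lemma abs_ncoef_next k : abs (ncoef (k.+1 * r)) <= 1 ->
  abs (ncoef (k.+2 * r)) <= abs (ncoef (k.+1 * r)) / T.
Proof.
move=> b1; have := abs_ncoef_step k.+1.
set a := abs (ncoef _); set b := abs (ncoef _); set Q := (q ^ r)%N; set N := (q ^ _)%N => E.
have QN : (Q.+1 <= N)%N.
  rewrite /N mulSn expnD; apply: ltn_Pmulr; first exact: card_expn_mulr_gt1.
  by rewrite expn_gt0 q_gt0.
have TQ0 : 0 < T ^+ Q := exprn_gt0 Q T_gt0.
have b0 : 0 <= b := abs_ge0 abs_na _.
have bQ : b ^+ Q <= b.
  by rewrite -[leRHS]expr1; apply: ler_wiXn2l => //; rewrite /Q expn_gt0 q_gt0.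
rewrite ler_pdivlMr // -(ler_pM2r TQ0) -mulrA -exprS.
apply: le_trans (_ : a * T ^+ N <= _).
  by apply: ler_wpM2l; [exact: abs_ge0 | rewrite ler_eXn2l].
by rewrite E; apply: ler_wpM2r => //; apply: ltW.
Qed.

Lemma abs_ncoef_le k : abs (ncoef (k.+1 * r)) <= eps ^+ k.
Proof.
elim: k => [|k IH]; first by rewrite mul1n abs_ncoef_r.
have b1 : abs (ncoef (k.+1 * r)) <= 1 by apply: le_trans IH _; apply: exprn_ile1.
by apply: le_trans (abs_ncoef_next b1) _; rewrite exprSr ler_wpM2r.
Qed.

Lemma abs_ncoef_le1 i : abs (ncoef i) <= 1.
Proof.
have [r_dvd_i|/ncoef_eq0 ->] := boolP (r %| i)%N; last by rewrite (abs0 abs_na).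
rewrite -(divnK r_dvd_i); case: (i %/ r)%N => [|k]; first by rewrite ncoef0 (abs1 abs_na).
by apply: le_trans (abs_ncoef_le k) _; apply: exprn_ile1.
Qed.

Lemma abs_ncoef_gt_r i : (r < i)%N -> abs (ncoef i) <= eps.
Proof.
have [r_dvd_i|/ncoef_eq0 ->] := boolP (r %| i)%N; last by rewrite (abs0 abs_na).
rewrite -(divnK r_dvd_i); case: (i %/ r)%N => [|[|k]]; rewrite ?mul0n ?mul1n ?ltnn //.
by move=> _; apply: le_trans (abs_ncoef_le k.+1) _; rewrite -[leRHS]expr1; apply: ler_wiXn2l.
Qed.

Lemma ncoef_cvg0 : seq_cvg abs ncoef 0.
Proof.
move=> e e0; have [N eN] := expr_lt_eps eps_ge0 eps_lt1 e0.
exists (N.+1 * r)%N => i Ni; rewrite subr0.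
have [r_dvd_i|/ncoef_eq0 ->] := boolP (r %| i)%N; last by rewrite (abs0 abs_na).
move: Ni; rewrite -(divnK r_dvd_i); case: (i %/ r)%N => [|k].
  by rewrite mul0n leqn0 muln_eq0 /= eqn0Ngt r_gt0.
rewrite leq_pmul2r // ltnS => Nk; apply: le_lt_trans (abs_ncoef_le k) _.
by apply: le_lt_trans eN; apply: ler_wiXn2l.
Qed.

Lemma sum_ncoef_r : \sum_(i < r.+1) ncoef i = 1 + ncoef r.
Proof.
rewrite -(big_mkord xpredT) big_nat_recr //= big_ltn // ncoef0 big_nat_cond big1 ?addr0 //.
by move=> i /andP[/andP[i0 ir] _]; apply: ncoef_eq0; rewrite gtnNdvd.
Qed.

Lemma abs_1_add_ncoef_r : abs (1 + ncoef r) <= eps.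
Proof.
have Q1 : (1 < q ^ r)%N := card_expn_gt1 F r_gt0.
have E : (1 + ncoef r) * (theta ^+ (q ^ r) - theta) = - theta.
  have := ncoef_step 0; rewrite mul0n mul1n ncoef0 expr1n mulN1r => E0.
  by rewrite mulrDl mul1r E0 addrC addKr.
have := congr1 abs E; rewrite (absM abs_na) (abs_thetaXB Q1) (absN abs_na) => aE.
have a0 := abs_ge0 abs_na (1 + ncoef r).
rewrite -(ler_pM2r T_gt0) mulVf ?lt0r_neq0 // -(ler_pM2r T_gt0) mul1r -mulrA -expr2.
by rewrite -[X in _ <= X]aE; apply: ler_wpM2l => //; rewrite ler_eXn2l.
Qed.

Lemma abs_sum_ncoef_le n : (r < n)%N -> abs (\sum_(i < n) ncoef i) <= eps.
Proof.
move=> rn; rewrite -(big_mkord xpredT) (big_cat_nat (leq0n r.+1) rn) big_mkord sum_ncoef_r /=.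
apply: (absD_le abs_na); first exact: abs_1_add_ncoef_r.
rewrite big_nat_cond; apply: (abs_sum_le abs_na) => // i /andP[/andP[ri _] _].
exact: abs_ncoef_gt_r.
Qed.

Lemma exists_period : exists w, [/\ Kinf w, w != 0 & lattice q abs alpha w].
Proof.
have KS := Kinf_subfield Kinf_spec.
have [z [Kz z1 fz0]] := exists_fpart_root abs_na KS (Kinf_complete Kinf_spec)
  (finNzRing_gt1 F) (exprD_card iota) ncoef0 ncoef_in_Kinf abs_ncoef_le1 ncoef_cvg0
  eps_ge0 eps_lt1 (ex_intro _ r.+1 abs_sum_ncoef_le).
exists (theta * z); split; first exact (subfieldM KS (Kinf_theta Kinf_spec) Kz).
  rewrite mulf_neq0 ?theta_neq0 //; apply: contraTneq z1 => ->.
  by rewrite sub0r (absN abs_na) (abs1 abs_na) -ltNge.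
apply: eq_cvg (cvgMl0 abs_na theta fz0) => n; rewrite /fpart mulr_sumr.
by apply: eq_bigr => i _; rewrite /ncoef exprMn; field; apply: theta_neq0.
Qed.

Lemma lattice_scale w x : lattice q abs alpha w -> x ^+ (q ^ r) = x ->
  lattice q abs alpha (x * w).
Proof.
move=> lw xq; apply: eq_cvg (cvgMl0 abs_na x lw) => n; rewrite mulr_sumr.
apply: eq_bigr => i _; have [r_dvd_i|/exp_coeff_eq0 ->] := boolP (r %| i)%N.
  by rewrite exprMn -(divnK r_dvd_i) mulnC expnM (expr_fixed_expn _ xq) mulrCA.
by rewrite !mul0r mulr0.
Qed.

Lemma in_Kinf_lattice x : x ^+ (q ^ r) = x -> Kinf_lattice q abs alpha Kinf x.
Proof.
move=> xq P P_subfield P_gen; have [w [_ w0 lw]] := exists_period.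
have Pw : P w by apply: P_gen; right.
have Pxw : P (x * w) by apply: P_gen; right; apply: lattice_scale.
by rewrite -(mulfK w0 x); apply: subfield_div.
Qed.
End ExponentialCoefficients.

Definition Fq_free (F : finFieldType) (L : fieldType) (iota : {rmorphism F -> L}) m
    (v : 'I_m -> L) :=
  forall a : 'I_m -> F, \sum_i iota (a i) * v i = 0 -> forall i, a i = 0.

Section ResidueField.
Variables (R : realType) (F : finFieldType) (L : fieldType) (iota : {rmorphism F -> L}).
Variables (abs : L -> R) (theta : L) (Kinf : L -> Prop).
Hypothesis abs_na : nonarch_abs abs.
Hypothesis Kinf_spec : is_Kinfty iota abs theta Kinf.
Local Notation q := #|F|.
Local Notation T := (abs theta).

Let T_gt1 : 1 < T := abs_theta_gt1 Kinf_spec.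
Let T_gt0 : 0 < T := lt_trans ltr01 T_gt1.

Lemma iota_expr_card c : iota c ^+ q = iota c.
Proof. by rewrite -rmorphXn expf_card. Qed.

Lemma abs_iota c : c != 0 -> abs (iota c) = 1.
Proof.
by move=> c0; rewrite (abs_fixed_pow abs_na (finNzRing_gt1 F)) ?iota_expr_card ?fmorph_eq0.
Qed.

Lemma abs_iota_le1 c : abs (iota c) <= 1.
Proof. by have [->|/abs_iota ->] := eqVneq c 0; rewrite ?rmorph0 ?(abs0 abs_na). Qed.

Definition eval_theta (p : {poly F}) := (map_poly iota p).[theta].

Lemma eval_theta0 : eval_theta 0 = 0. Proof. by rewrite /eval_theta rmorph0 horner0. Qed.
Lemma eval_thetaC c : eval_theta c%:P = iota c.
Proof. by rewrite /eval_theta map_polyC hornerC. Qed.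
Lemma eval_thetaX : eval_theta 'X = theta. Proof. by rewrite /eval_theta map_polyX hornerX. Qed.
Lemma eval_thetaD p p' : eval_theta (p + p') = eval_theta p + eval_theta p'.
Proof. by rewrite /eval_theta rmorphD hornerD. Qed.
Lemma eval_thetaM p p' : eval_theta (p * p') = eval_theta p * eval_theta p'.
Proof. by rewrite /eval_theta rmorphM hornerM. Qed.

Lemma abs_eval_theta p : p != 0 -> abs (eval_theta p) = T ^+ (size p).-1.
Proof.
elim/poly_ind: p => [|p c IH] pc0; first by rewrite eqxx in pc0.
rewrite size_MXaddC eval_thetaD eval_thetaM eval_thetaX eval_thetaC.
have [p0|p0] := eqVneq p 0.
  move: pc0; rewrite p0 mul0r add0r polyC_eq0 => c0.
  by rewrite (negbTE c0) andbF size_poly0 eval_theta0 mul0r add0r abs_iota.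
rewrite /= (absD_dominant abs_na) (absM abs_na) IH // -exprSr prednK ?size_poly_gt0 //.
apply: le_lt_trans (abs_iota_le1 c) _.
by rewrite -(expr0 T) ltr_eXn2l // size_poly_gt0.
Qed.

Lemma eval_theta_neq0 p : p != 0 -> eval_theta p != 0.
Proof.
move=> p0; apply: contra_neq (lt0r_neq0 (exprn_gt0 (size p).-1 T_gt0)) => ev0.
by rewrite -(abs_eval_theta p0) ev0 (abs0 abs_na).
Qed.

Lemma abs_eval_theta_div_lt (p d : {poly F}) : (size p < size d)%N ->
  abs (eval_theta p / eval_theta d) < 1.
Proof.
move=> pd; have [->|p0] := eqVneq p 0; first by rewrite eval_theta0 mul0r (abs0 abs_na).
have d0 : d != 0 by rewrite -size_poly_gt0 (leq_ltn_trans (leq0n _) pd).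
rewrite (absM abs_na) (absV abs_na) !abs_eval_theta // ltr_pdivrMr ?exprn_gt0 // mul1r.
by rewrite ltr_eXn2l //; move: pd p0; rewrite -size_poly_gt0; lia.
Qed.

Lemma abs_eval_theta_div_le (p d : {poly F}) : d != 0 ->
  abs (eval_theta p / eval_theta d) <= 1 -> (size p <= size d)%N.
Proof.
move=> d0 pd1; rewrite leqNgt; apply/negP => dp.
have p0 : p != 0 by rewrite -size_poly_gt0 (leq_ltn_trans (leq0n _) dp).
have pd0 : 0 < abs (eval_theta p / eval_theta d).
  by rewrite (abs_gt0 abs_na) // mulf_neq0 ?invr_neq0 ?eval_theta_neq0.
by have := abs_eval_theta_div_lt dp; rewrite -invf_div (absV abs_na) invf_lt1 // ltNge pd1.
Qed.

Lemma residue_iota c : Kinf c -> abs c <= 1 -> exists a, abs (c - iota a) < 1.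
Proof.
move=> Kc c1; have [p [d [d0 cpd]]] := Kinf_approx Kinf_spec Kc ltr01.
rewrite -/(eval_theta p) -/(eval_theta d) in d0 cpd.
have {}d0 : d != 0 by apply: contraNneq d0 => ->; rewrite eval_theta0.
have pd1 : abs (eval_theta p / eval_theta d) <= 1.
  by rewrite -[_ / _](subKr c); apply: (absB_le abs_na) c1 (ltW cpd).
have [a pda] : exists a, p %/ d = a%:P.
  exists (p %/ d)`_0; apply: size1_polyC; rewrite size_divp //.
  rewrite leq_subLR addn1.
  exact: leq_trans (abs_eval_theta_div_le d0 pd1) (leqSpred _).
exists a; have E : c - iota a =
    (c - eval_theta p / eval_theta d) + eval_theta (p %% d) / eval_theta d.
  rewrite [p in eval_theta p](divp_eq p d) pda eval_thetaD eval_thetaM eval_thetaC.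
  by field; apply: eval_theta_neq0.
rewrite E; apply: (absD_lt abs_na) => //.
by apply: abs_eval_theta_div_lt; rewrite ltn_modp.
Qed.

Section FreeFamilies.
Variables (m Q : nat) (v : 'I_m -> L).
Hypothesis Q_gt0 : (0 < Q)%N.
Hypothesis v_fixed : forall i, v i ^+ (q ^ Q) = v i.
Hypothesis v_free : Fq_free iota v.

Let qQ_gt1 : (1 < q ^ Q)%N := card_expn_gt1 F Q_gt0.

(* The residues a i of the c i give an F_q-combination of the v i that is small
   and fixed by x |-> x ^+ (q ^ Q), hence zero; so all a i vanish. *)
Lemma Kinf_relation_abs_lt1 (c : 'I_m -> L) : (forall i, Kinf (c i)) ->
  (forall i, abs (c i) <= 1) -> \sum_i c i * v i = 0 -> forall i, abs (c i) < 1.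
Proof.
move=> Kc c1 cv0.
have /fin_all_exists[a ca] : forall i, exists a : F, abs (c i - iota a) < 1.
  by move=> i; apply: residue_iota.
have E : \sum_i (iota (a i) - c i) * v i = \sum_i iota (a i) * v i.
  by under eq_bigr do rewrite mulrBl; rewrite sumrB cv0 subr0.
have w_small : abs (\sum_i iota (a i) * v i) < 1.
  rewrite -E; apply: (abs_sum_lt abs_na) => // i _; rewrite (absM abs_na) (absBC abs_na).
  apply: le_lt_trans (ca i); rewrite -[leRHS]mulr1; apply: ler_wpM2l; first exact: abs_ge0.
  exact (abs_fixed_pow_le1 abs_na qQ_gt1 (v_fixed i)).
have w_fixed : (\sum_i iota (a i) * v i) ^+ (q ^ Q) = \sum_i iota (a i) * v i.
  rewrite (expr_sum_qn (ltnW (finNzRing_gt1 F)) (exprD_card iota)).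
  by apply: eq_bigr => i _; rewrite exprMn (expr_fixed_expn _ (iota_expr_card _)) v_fixed.
have w0 : \sum_i iota (a i) * v i = 0.
  apply: contraTeq w_small => w0.
  by rewrite (abs_fixed_pow abs_na qQ_gt1 w_fixed w0) ltxx.
by move=> i; have := ca i; rewrite (v_free w0) rmorph0 subr0.
Qed.

Lemma Kinf_free (c : 'I_m -> L) :
  (forall i, Kinf (c i)) -> \sum_i c i * v i = 0 -> forall i, c i = 0.
Proof.
move=> Kc cv0; case: (pickP (fun i => c i != 0)) => [i0 ci0|c0]; last first.
  by move=> i; apply/eqP; apply: negbFE (c0 i).
have [i1 _ max_i1] := @arg_maxP _ R _ i0 xpredT (fun i => abs (c i)) isT.
have ci1 : c i1 != 0.
  apply: contraTneq (lt_le_trans (abs_gt0 abs_na ci0) (max_i1 i0 isT)) => ->.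
  by rewrite (abs0 abs_na) ltxx.
suff : abs (c i1 / c i1) < 1 by rewrite mulfV // (abs1 abs_na) ltxx.
apply: (@Kinf_relation_abs_lt1 (fun i => c i / c i1)) => [i|i|].
- exact (subfield_div (Kinf_subfield Kinf_spec) (Kc i) (Kc i1)).
- rewrite (absM abs_na) (absV abs_na) ler_pdivrMr ?mul1r ?(abs_gt0 abs_na) //.
  exact: max_i1.
- by under eq_bigr do rewrite mulrAC; rewrite -mulr_suml cv0 mul0r.
Qed.

End FreeFamilies.

End ResidueField.

Section FqFreeRoots.
Variables (F : finFieldType) (L : closedFieldType) (iota : {rmorphism F -> L}).
Local Notation q := #|F|.

(* X^(q^n) - X is separable since its derivative is -1. *)
Lemma roots_XqnX n : (0 < n)%N -> exists s : seq L,
  [/\ uniq s, size s = (q ^ n)%N & forall z, z \in s -> z ^+ (q ^ n) = z].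
Proof.
move=> n0; set p : {poly L} := 'X^(q ^ n) - 'X.
have q_n_gt1 := card_expn_gt1 F n0.
have size_p : size p = (q ^ n).+1.
  by rewrite size_polyDl ?size_polyXn // size_polyN size_polyX ltnS.
have lead_p : lead_coef p = 1.
  by rewrite lead_coefDl ?lead_coefXn // size_polyXn size_polyN size_polyX ltnS.
have [s ps] := closed_field_poly_normal p; rewrite lead_p scale1r in ps.
exists s; split.
- rewrite -separable_prod_XsubC -ps unlock /separable_poly derivB derivXn derivX.
  rewrite -mulr_natr -polyC_natr (natr_card_expn iota n0) mulr0 sub0r.
  by rewrite -scaleN1r coprimepZr ?oppr_eq0 ?oner_eq0 // coprimep1.
- by have := size_prod_XsubC s id; rewrite -ps size_p => -[].
- move=> z zs; have : root p z by rewrite ps root_prod_XsubC.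
  by rewrite rootE !hornerE subr_eq0 => /eqP.
Qed.

Lemma exists_notin_Fq_span m (v : 'I_m -> L) (s : seq L) : uniq s -> (q ^ m < size s)%N ->
  exists2 w, w \in s & forall a : 'I_m -> F, w != \sum_i iota (a i) * v i.
Proof.
move=> s_uniq s_big; set span := map (fun a : {ffun 'I_m -> F} => \sum_i iota (a i) * v i)
  (enum {ffun 'I_m -> F}).
have /allPn[w ws w_span] : ~~ all (mem span) s.
  apply: contraTN s_big => /allP s_span; rewrite -leqNgt.
  apply: leq_trans (uniq_leq_size s_uniq s_span) _.
  by rewrite size_map -cardE card_ffun card_ord.
exists w => // a; apply: contraNneq w_span => ->; apply/mapP.
by exists (finfun a); rewrite ?mem_enum //; apply: eq_bigr => i _; rewrite ffunE.
Qed.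

Definition extend_ord m (v : 'I_m -> L) w (i : 'I_m.+1) :=
  if unlift ord_max i is Some j then v j else w.

Lemma extend_ord_widen m (v : 'I_m -> L) w j : extend_ord v w (widen_ord (leqnSn m) j) = v j.
Proof.
have -> : widen_ord (leqnSn m) j = lift ord_max j by apply: val_inj; exact: (esym (lift_max j)).
by rewrite /extend_ord liftK.
Qed.

Lemma extend_ord_max m (v : 'I_m -> L) w : extend_ord v w ord_max = w.
Proof. by rewrite /extend_ord unlift_none. Qed.

Lemma Fq_free_extend m (v : 'I_m -> L) w : Fq_free iota v ->
  (forall a : 'I_m -> F, w != \sum_i iota (a i) * v i) -> Fq_free iota (extend_ord v w).
Proof.
move=> v_free w_out a; rewrite big_ord_recr /= extend_ord_max.
under eq_bigr do rewrite extend_ord_widen.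
move=> /eqP; rewrite addr_eq0 => /eqP aw.
have a_max : a ord_max = 0.
  apply/eqP; apply: contraNT (w_out (fun i => - a (widen_ord (leqnSn m) i) / a ord_max)) => a0.
  have iota_a0 : iota (a ord_max) != 0 by rewrite fmorph_eq0.
  apply/eqP; apply: (mulfI iota_a0); rewrite -[iota _ * w]opprK -aw mulr_sumr -sumrN.
  apply: eq_bigr => i _; rewrite rmorphM rmorphN fmorphV; field; exact: iota_a0.
rewrite a_max rmorph0 mul0r oppr0 in aw.
move=> i; case: (unliftP ord_max i) => [j ->|->] //.
have -> : lift ord_max j = widen_ord (leqnSn m) j by apply: val_inj; exact: lift_max.
exact: (v_free _ aw).
Qed.

Lemma exists_Fq_free_roots r : (0 < r)%N ->
  exists v : 'I_r -> L, (forall i, v i ^+ (q ^ r) = v i) /\ Fq_free iota v.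
Proof.
move=> r0; have [s [s_uniq s_size s_roots]] := roots_XqnX r0.
suff: forall m, (m <= r)%N ->
    exists v : 'I_m -> L, (forall i, v i ^+ (q ^ r) = v i) /\ Fq_free iota v.
  by apply.
elim=> [|m IH] mr; first by exists (fun _ => 0); split=> [[]|a _ []].
have [v [v_roots v_free]] := IH (ltnW mr).
have s_big : (q ^ m < size s)%N by rewrite s_size ltn_exp2l // finNzRing_gt1.
have [w ws w_out] := exists_notin_Fq_span v s_uniq s_big.
exists (extend_ord v w); split; last exact: Fq_free_extend.
by move=> i; rewrite /extend_ord; case: unliftP => [j _|_]; [apply: v_roots | apply: s_roots].
Qed.

End FqFreeRoots.

Lemma alg_over_Fq_fixed (F : finFieldType) (L : fieldType) (iota : {rmorphism F -> L}) x n :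
  (0 < n)%N -> x ^+ (#|F| ^ n) = x -> alg_over_Fq iota x.
Proof.
move=> n0 xn; exists ('X^(#|F| ^ n) - 'X); split.
  by rewrite -size_poly_gt0 size_polyDl ?size_polyXn // size_polyN size_polyX ltnS card_expn_gt1.
by rewrite rootE rmorphB /= map_polyXn map_polyX !hornerE xn subrr.
Qed.

Section LatticeField.
Variables (R : realType) (F : finFieldType) (L : closedFieldType) (iota : {rmorphism F -> L}).
Variables (abs : L -> R) (theta : L) (Kinf : L -> Prop).
Hypothesis abs_na : nonarch_abs abs.
Hypothesis Kinf_spec : is_Kinfty iota abs theta Kinf.
Variable r : nat.
Hypothesis r_gt0 : (0 < r)%N.
Local Notation q := #|F|.

Lemma phi_theta_torsion x : phi_apply q (phi_coef theta r) r x = 0 <-> x ^+ (q ^ r) = x.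
Proof.
rewrite phi_apply_theta // -mulrBr; split=> [/eqP|->]; last by rewrite subrr mulr0.
by rewrite mulf_eq0 (negbTE (theta_neq0 abs_na Kinf_spec)) subr_eq0 => /eqP/esym.
Qed.

Variable alpha : nat -> L.
Hypothesis alpha_exp : is_exp_coeffs q theta (phi_coef theta r) r alpha.
Local Notation Kinf_Lambda := (Kinf_lattice q abs alpha Kinf).

Lemma deg_Kinf_lattice_ge : deg_ge Kinf Kinf_Lambda r.
Proof.
have [v [v_roots v_free]] := exists_Fq_free_roots iota r_gt0.
exists v; split=> [i|c Kc].
  exact (in_Kinf_lattice abs_na Kinf_spec r_gt0 alpha_exp (v_roots i)).
exact (Kinf_free abs_na Kinf_spec r_gt0 v_roots v_free Kc).
Qed.

Lemma deg_const_field_ge :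
  deg_ge (in_Fq iota) (fun x => alg_over_Fq iota x /\ Kinf_Lambda x) r.
Proof.
have [v [v_roots v_free]] := exists_Fq_free_roots iota r_gt0.
exists v; split=> [i|c /fin_all_exists[a ca] cv0 i].
  split; first exact (alg_over_Fq_fixed iota r_gt0 (v_roots i)).
  exact (in_Kinf_lattice abs_na Kinf_spec r_gt0 alpha_exp (v_roots i)).
rewrite ca (v_free a) ?rmorph0 //.
by under eq_bigr do rewrite -ca.
Qed.

End LatticeField.

Theorem mainTheorem5 (R : realType) (F : finFieldType) (L : closedFieldType)
  (iota : {rmorphism F -> L}) (abs : L -> R) (theta : L) (Kinf : L -> Prop) :
  nonarch_abs abs -> is_Kinfty iota abs theta Kinf -> algebraic_over Kinf ->
  (forall r : nat, (1 <= r)%N -> forall alpha : nat -> L,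
     is_exp_coeffs #|F| theta (phi_coef theta r) r alpha ->
     [/\ (forall x : L, phi_apply #|F| (phi_coef theta r) r x = 0 <->
                        x ^+ (#|F| ^ r)%N = x),
         (forall x : L, x ^+ (#|F| ^ r)%N = x ->
                        Kinf_lattice #|F| abs alpha Kinf x) &
         deg_ge Kinf (Kinf_lattice #|F| abs alpha Kinf) r])
  /\ (forall B : nat, exists r : nat, (1 <= r)%N /\
        forall alpha : nat -> L, is_exp_coeffs #|F| theta (phi_coef theta r) r alpha ->
        deg_ge Kinf (Kinf_lattice #|F| abs alpha Kinf) B.+1)
  /\ (forall B : nat, exists r : nat, (1 <= r)%N /\
        forall alpha : nat -> L, is_exp_coeffs #|F| theta (phi_coef theta r) r alpha ->
        deg_ge (in_Fq iota)
          (fun x => alg_over_Fq iota x /\ Kinf_lattice #|F| abs alpha Kinf x) B.+1).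
Proof.
move=> abs_na Kinf_spec _; split.
  move=> r r_gt0 alpha alpha_exp; split.
  - exact: (phi_theta_torsion abs_na Kinf_spec r_gt0).
  - exact: (in_Kinf_lattice abs_na Kinf_spec r_gt0 alpha_exp).
  - exact: (deg_Kinf_lattice_ge abs_na Kinf_spec r_gt0 alpha_exp).
split=> B; exists B.+1; split=> // alpha alpha_exp.
- exact: (deg_Kinf_lattice_ge abs_na Kinf_spec (ltn0Sn B) alpha_exp).
- exact: (deg_const_field_ge abs_na Kinf_spec (ltn0Sn B) alpha_exp).
Qed.
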